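(* Let $n$ be a positive integer, let $W\in M(n,n;\mathbb F_2)$ have all diagonal entries equal to $1$, and let $c\in\mathbb F_2^n$. Then the mean value of $|Wx+c|$ over all $x\in\mathbb F_2^n$ is $n/2$. In particular, $M(W,c)\ge n/2$, and $M(W,c)>n/2$ if the number of indices $i\in\{1,\dots,n\}$ with $c_i=1$ is not equal to $n/2$.
   Context: $\mathbb F_2=\{0,1\}$ is the field with two elements. For $u\in\mathbb F_2^n$, $|u|$ denotes the Hamming weight of $u$ (number of entries equal to $1$). $M(W,c)=\max\{|Wx+c| : x\in\mathbb F_2^n\}$. *)

From mathcomp Require Import all_boot all_order all_algebra.
Set Implicit Arguments. Unset Strict Implicit. Unset Printing Implicit Defensive.
Import Order.TTheory GRing.Theory Num.Theory.
Local Open Scope ring_scope.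

Definition hweight (n : nat) (u : 'cV['F_2]_n) : nat :=
  #|[set i : 'I_n | u i 0 == 1]|.

Definition Mwc (n : nat) (W : 'M['F_2]_n) (c : 'cV['F_2]_n) : nat :=
  \max_(x : 'cV['F_2]_n) hweight (W *m x + c).

From mathcomp Require Import all_boot all_order all_algebra.
Import Order.TTheory GRing.Theory Num.Theory.

Set Implicit Arguments.
Unset Strict Implicit.
Unset Printing Implicit Defensive.

Local Open Scope ring_scope.

(* Since W i i = 1, translating x by the i-th basis vector flips the i-th
   coordinate of W x + c.  Hence every coordinate of W x + c equals 1 for
   exactly half of the x, and summing over the n coordinates gives a total
   weight of n 2^n / 2, i.e. mean n / 2.  A maximum is at least the mean,
   and equals it only if the weight is constant; evaluating at x = 0 then
   gives |c| = n / 2. *)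

Lemma F2_add1_eq1 (b : 'F_2) : (b + 1 == 1) = (b != 1).
Proof. by case: b => [[|[|//]]] ?. Qed.

Section TranslationFlip.

Variables (V : finZmodType) (phi : V -> 'F_2) (d : V).
Hypothesis phiD : forall x, phi (x + d) = phi x + 1.

Lemma card_F2_level1 : (2 * #|[set x | (phi x == 1)%R]| = #|V|)%N.
Proof.
set A := [set x | phi x == 1].
have preimA : (+%R^~ d) @^-1: A = ~: A.
  by apply/setP => x; rewrite !inE phiD F2_add1_eq1.
by rewrite mul2n -addnn -{2}(card_preimset _ (addIr d)) preimA cardsC.
Qed.

End TranslationFlip.

Lemma affine_coord_add_delta (R : pzRingType) n (W : 'M[R]_n) (c x : 'cV[R]_n)
    (i : 'I_n) :
  (W *m (x + delta_mx i 0) + c) i 0 = (W *m x + c) i 0 + W i i.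
Proof. by rewrite mulmxDr -colE addrAC !mxE. Qed.

Lemma card_affine_coord_eq1 n (W : 'M['F_2]_n) (c : 'cV['F_2]_n) (i : 'I_n) :
  W i i = 1 ->
  (2 * #|[set x : 'cV_n | ((W *m x + c) i 0 == 1)%R]| = #|{: 'cV['F_2]_n}|)%N.
Proof.
by move=> Wii; apply: (@card_F2_level1 _ _ (delta_mx i 0)) => x;
  rewrite affine_coord_add_delta Wii.
Qed.

Lemma sum_nat_bool_card (T : finType) (P : pred T) :
  (\sum_x P x)%N = #|[set x | P x]|.
Proof.
rewrite -sum1_card [RHS]big_mkcond; apply: eq_bigr => x _.
by rewrite inE; case: (P x).
Qed.

Lemma sum_hweight_affine n (W : 'M['F_2]_n) (c : 'cV['F_2]_n) :
  (forall i, W i i = 1) ->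
  (2 * \sum_x hweight (W *m x + c)%R = n * #|{: 'cV['F_2]_n}|)%N.
Proof.
move=> Wdiag; under eq_bigr do rewrite /hweight -sum_nat_bool_card.
rewrite exchange_big big_distrr /= (eq_bigr (fun=> #|{: 'cV['F_2]_n}|)).
  by rewrite sum_nat_const card_ord.
by move=> i _; rewrite sum_nat_bool_card card_affine_coord_eq1.
Qed.

Section SumBigmax.

Variables (T : finType) (F : T -> nat).

Lemma sum_leq_card_bigmax : (\sum_x F x <= #|T| * \max_x F x)%N.
Proof.
by rewrite -sum_nat_const; apply: leq_sum => x _; exact: (leq_bigmax (F := F)).
Qed.

Lemma sum_eq_card_bigmax (x : T) :
  (\sum_y F y = #|T| * \max_y F y)%N -> F x = \max_y F y.
Proof.
move=> sumF; have bounded y : (F y <= \max_z F z)%N by exact: (leq_bigmax (F := F)).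
apply/eqP; rewrite eqn_leq bounded /= -subn_eq0.
have : (\sum_y (\max_z F z - F y) == 0)%N.
  by rewrite sumnB // sum_nat_const sumF subnn.
by rewrite sum_nat_eq0 => /forallP /(_ x).
Qed.

End SumBigmax.

Lemma half_natr_le (R : numFieldType) (a b : nat) :
  (a%:R / 2 <= b%:R :> R) = (a <= 2 * b)%N.
Proof. by rewrite ler_pdivrMr // -natrM mulnC ler_nat. Qed.

Lemma half_natr_lt (R : numFieldType) (a b : nat) :
  (a%:R / 2 < b%:R :> R) = (a < 2 * b)%N.
Proof. by rewrite ltr_pdivrMr // -natrM mulnC ltr_nat. Qed.

Theorem lemma3p1 (n : nat) (W : 'M['F_2]_n) (c : 'cV['F_2]_n) :
  (0 < n)%N ->
  (forall i : 'I_n, W i i = 1) ->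
  [/\ (\sum_(x : 'cV['F_2]_n) (hweight (W *m x + c))%:R) / (#|{: 'cV['F_2]_n}|)%:R
        = (n%:R / 2 : rat),
      (n%:R / 2 : rat) <= (Mwc W c)%:R
    & ((hweight c)%:R != (n%:R / 2 : rat) -> (n%:R / 2 : rat) < (Mwc W c)%:R)].
Proof.
move=> _ Wdiag; set N := #|{: 'cV['F_2]_n}|; set M := Mwc W c.
have sum2 : (2 * \sum_x hweight (W *m x + c)%R = n * N)%N.
  exact: sum_hweight_affine.
have N_gt0 : (0 < N)%N by rewrite /N (cardD1 0).
have n_le_2M : (n <= 2 * M)%N.
  rewrite -(leq_pmul2r N_gt0) -sum2 -mulnA leq_pmul2l // mulnC.
  exact: sum_leq_card_bigmax.
split; first by rewrite -natr_sum; apply/eqP;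
  rewrite eqr_div ?pnatr_eq0 -?lt0n // -!natrM eqr_nat mulnC sum2.
- by rewrite (half_natr_le _ n M).
- apply: contraNT; rewrite half_natr_lt -leqNgt => n_ge_2M.
  have n_eq : n = (2 * M)%N by apply/eqP; rewrite eqn_leq n_le_2M.
  have sumM : (\sum_x hweight (W *m x + c)%R = N * M)%N.
    by apply/eqP; rewrite -(eqn_pmul2l (isT : (0 < 2)%N)) sum2 n_eq -mulnA (mulnC M).
  have := sum_eq_card_bigmax 0 sumM; rewrite mulmx0 add0r => ->.
  have n_eqR : n%:R = 2 * M%:R :> rat by rewrite n_eq natrM.
  by rewrite -/(Mwc W c) -/M n_eqR mulrC mulKf.
Qed.
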